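(* Let $2\le d\le D$ be integers and $\bar d$ a sequence with $d\le d_i\le D$ for all $i$. There is a constant $C$ depending only on $D$ such that for all $n\ge2$, $$\beta_d\le\beta(n)\le\beta_D+\frac{C}{\log n},\qquad\text{where }\ \beta_x=\frac{\log x}{\log\frac{x^2}{x-1}}=\frac{1}{2-\frac{\log(x-1)}{\log x}}.$$
   Context: $p_i=\frac{d_i-1}{d_i^2}$, $k(n)=\min\{k\ge0:p_0p_1\cdots p_kn\le1\}$, $\beta(n)=\frac{\log(d_0d_1\cdots d_{k(n)})}{\log n}$. *)

From Stdlib Require Import Reals Lra Lia ClassicalEpsilon.
Open Scope R_scope.

Fixpoint prodR (f : nat -> R) (k : nat) : R :=
  match k with
  | O => f O
  | S k' => prodR f k' * f (S k')
  end.

Definition pfac (ds : nat -> nat) (i : nat) : R :=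
  (INR (ds i) - 1) / (INR (ds i)) ^ 2.

Definition IsK (ds : nat -> nat) (n : R) (k : nat) : Prop :=
  prodR (pfac ds) k * n <= 1 /\
  (forall j : nat, (j < k)%nat -> ~ (prodR (pfac ds) j * n <= 1)).

(* k(n) := min { k >= 0 : p_0 ... p_k n <= 1 } (chosen by Hilbert epsilon;
   it exists and is unique whenever all d_i >= 2) *)
Definition kn (ds : nat -> nat) (n : R) : nat :=
  epsilon (inhabits O) (fun k => IsK ds n k).

Definition beta (ds : nat -> nat) (n : R) : R :=
  ln (prodR (fun i => INR (ds i)) (kn ds n)) / ln n.

Definition beta_x (x : R) : R := ln x / ln (x ^ 2 / (x - 1)).

(* Write L(x) = ln (x^2/(x-1)), so that p_i = (d_i - 1)/d_i^2 satisfies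
   -ln p_i = L(d_i) and beta_x = ln x / L(x).  Rewriting
   beta_x = 1 / (2 - h x) with h x = ln (x-1) / ln x, the log-concavity
   estimate ln (x-1) ln (x+1) <= (ln x)^2 makes h, hence beta_x,
   nondecreasing on integers >= 2.  Therefore every factor satisfies
   beta_d L(d_i) <= ln d_i <= beta_D L(d_i), and summing over i <= k gives
     beta_d (-ln P_k) <= ln (d_0 ... d_k) <= beta_D (-ln P_k),
   where P_k = p_0 ... p_k.  Since p_i <= 1/4 we have P_k <= 1/(k+1), so the
   index k(n) exists.  Minimality of k = k(n) now yields both bounds:
   P_k n <= 1 gives -ln P_k >= ln n (lower bound), and, if k > 0,
   P_{k-1} n > 1 gives -ln P_{k-1} < ln n, so that
   ln (d_0 ... d_k) <= beta_D ln n + ln D (upper bound, with C = ln D). *)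

From Stdlib Require Import Reals Lra Lia Classical ClassicalEpsilon Arith Wf_nat.
Open Scope R_scope.

Lemma ln_le x y : 0 < x -> x <= y -> ln x <= ln y.
Proof. intros Hx [Hxy | <-]; [left; apply ln_increasing |]; lra. Qed.

Lemma ln_div x y : 0 < x -> 0 < y -> ln (x / y) = ln x - ln y.
Proof.
  intros Hx Hy. unfold Rdiv.
  rewrite ln_mult, ln_Rinv; auto with real.
Qed.

Lemma ln_nonneg x : 1 <= x -> 0 <= ln x.
Proof. intro H. rewrite <- ln_1. apply ln_le; lra. Qed.

Lemma ln_pos x : 1 < x -> 0 < ln x.
Proof. intro H. rewrite <- ln_1. apply ln_increasing; lra. Qed.

Lemma INR_ge2 (m : nat) : (2 <= m)%nat -> 2 <= INR m.
Proof. intro H. apply (le_INR 2) in H. simpl in H. lra. Qed.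

Definition log_ratio (x : R) : R := ln (x - 1) / ln x.

(* L(x) = ln (x^2/(x-1)), the quantity -ln p for a degree x. *)
Definition Lfac (x : R) : R := ln (x ^ 2 / (x - 1)).

Lemma Lfac_eq x : 1 < x -> Lfac x = 2 * ln x - ln (x - 1).
Proof.
  intro H. unfold Lfac. rewrite ln_div, ln_pow by nra. simpl INR. ring.
Qed.

Lemma Lfac_pos x : 2 <= x -> 0 < Lfac x.
Proof.
  intro H. rewrite Lfac_eq by lra.
  assert (ln (x - 1) < ln x) by (apply ln_increasing; lra).
  pose proof (ln_pos x). lra.
Qed.

Lemma ln_log_concave x : 2 <= x -> ln (x - 1) * ln (x + 1) <= ln x * ln x.
Proof.
  intro H.
  assert (Hu : 0 <= ln (x - 1)) by (apply ln_nonneg; lra).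
  assert (Hv : 0 <= ln (x + 1)) by (apply ln_nonneg; lra).
  (* concavity of ln: ln (x-1) + ln (x+1) = ln (x^2 - 1) <= 2 ln x *)
  assert (Hsum : ln (x - 1) + ln (x + 1) <= ln x + ln x).
  { rewrite <- !ln_mult by lra. apply ln_le; nra. }
  (* AM-GM: u v <= ((u + v)/2)^2 *)
  pose proof (Rle_0_sqr (ln (x - 1) - ln (x + 1))). unfold Rsqr in *. nra.
Qed.

Lemma log_ratio_step y : 2 <= y -> log_ratio y <= log_ratio (y + 1).
Proof.
  intro H. unfold log_ratio. replace (y + 1 - 1) with y by ring.
  pose proof (ln_pos y ltac:(lra)). pose proof (ln_pos (y + 1) ltac:(lra)).
  apply (Rmult_le_reg_r (ln y * ln (y + 1))); [nra |].
  replace (ln (y - 1) / ln y * (ln y * ln (y + 1))) with (ln (y - 1) * ln (y + 1))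
    by (field; lra).
  replace (ln y / ln (y + 1) * (ln y * ln (y + 1))) with (ln y * ln y)
    by (field; lra).
  apply ln_log_concave; lra.
Qed.

Lemma log_ratio_mono (a b : nat) :
  (2 <= a)%nat -> (a <= b)%nat -> log_ratio (INR a) <= log_ratio (INR b).
Proof.
  intros Ha Hab. induction Hab as [| b Hab IH]; [lra |].
  rewrite S_INR. eapply Rle_trans; [exact IH |].
  apply log_ratio_step. apply INR_ge2. lia.
Qed.

Lemma log_ratio_range x : 2 <= x -> 0 <= log_ratio x < 1.
Proof.
  intro H. unfold log_ratio. pose proof (ln_pos x ltac:(lra)).
  assert (0 <= ln (x - 1)) by (apply ln_nonneg; lra).
  assert (ln (x - 1) < ln x) by (apply ln_increasing; lra).
  split.
  - apply Rmult_le_pos; [lra | left; apply Rinv_0_lt_compat; lra].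
  - apply (Rmult_lt_reg_r (ln x)); [lra |]. field_simplify; lra.
Qed.

Lemma beta_x_eq x : 2 <= x -> beta_x x = / (2 - log_ratio x).
Proof.
  intro H. unfold beta_x, log_ratio. fold (Lfac x). rewrite Lfac_eq by lra.
  pose proof (ln_pos x ltac:(lra)).
  assert (ln (x - 1) < ln x) by (apply ln_increasing; lra).
  field. lra.
Qed.

Lemma beta_x_pos x : 2 <= x -> 0 < beta_x x.
Proof.
  intro H. rewrite beta_x_eq by lra. pose proof (log_ratio_range x H).
  apply Rinv_0_lt_compat; lra.
Qed.

Lemma beta_x_mono (a b : nat) :
  (2 <= a)%nat -> (a <= b)%nat -> beta_x (INR a) <= beta_x (INR b).
Proof.
  intros Ha Hab.
  pose proof (INR_ge2 a Ha). pose proof (INR_ge2 b ltac:(lia)).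
  rewrite !beta_x_eq by lra.
  pose proof (log_ratio_mono a b Ha Hab).
  pose proof (log_ratio_range (INR b) ltac:(lra)).
  apply Rinv_le_contravar; lra.
Qed.

Lemma ln_between_betas (d m D : nat) :
  (2 <= d)%nat -> (d <= m)%nat -> (m <= D)%nat ->
  beta_x (INR d) * Lfac (INR m) <= ln (INR m) <= beta_x (INR D) * Lfac (INR m).
Proof.
  intros Hd Hdm HmD. pose proof (INR_ge2 m ltac:(lia)).
  pose proof (Lfac_pos (INR m) ltac:(lra)).
  assert (E : ln (INR m) = beta_x (INR m) * Lfac (INR m)).
  { unfold beta_x. fold (Lfac (INR m)). field. lra. }
  rewrite E. split; apply Rmult_le_compat_r; try lra; apply beta_x_mono; lia.
Qed.

Lemma prodR_pos (f : nat -> R) k : (forall i, 0 < f i) -> 0 < prodR f k.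
Proof.
  intro Hf. induction k; simpl; [| apply Rmult_lt_0_compat]; auto.
Qed.

Lemma least_witness (P : nat -> Prop) :
  (exists k, P k) -> exists k, P k /\ forall j, (j < k)%nat -> ~ P j.
Proof.
  intros [k Hk]. revert Hk.
  induction k as [k IH] using (well_founded_induction lt_wf). intro Hk.
  destruct (classic (exists j, (j < k)%nat /\ P j)) as [[j [Hj Pj]] | N].
  - exact (IH j Hj Pj).
  - exists k. split; [exact Hk |]. intros j Hj Pj. apply N. eauto.
Qed.

Section BoundedDegrees.
Variables (d D : nat) (ds : nat -> nat).
Hypothesis Hd : (2 <= d)%nat.
Hypothesis Hds : forall i, (d <= ds i)%nat /\ (ds i <= D)%nat.

Let deg (i : nat) : R := INR (ds i).

Lemma deg_ge2 i : 2 <= deg i.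
Proof. apply INR_ge2. destruct (Hds i). lia. Qed.

Lemma deg_le_D i : ln (deg i) <= ln (INR D).
Proof.
  pose proof (deg_ge2 i). apply ln_le; [lra |]. apply le_INR. apply Hds.
Qed.

Lemma pfac_bounds i : 0 < pfac ds i <= / 4.
Proof.
  unfold pfac. fold (deg i). pose proof (deg_ge2 i). split.
  - apply Rdiv_lt_0_compat; nra.
  - apply (Rmult_le_reg_r (deg i ^ 2)); [nra |]. field_simplify; nra.
Qed.

Lemma ln_pfac i : - ln (pfac ds i) = Lfac (deg i).
Proof.
  pose proof (deg_ge2 i). unfold pfac, Lfac. fold (deg i).
  rewrite !ln_div by nra. ring.
Qed.

Lemma pprod_pos k : 0 < prodR (pfac ds) k.
Proof. apply prodR_pos. apply pfac_bounds. Qed.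

Lemma dprod_pos k : 0 < prodR deg k.
Proof. apply prodR_pos. intro i. pose proof (deg_ge2 i). lra. Qed.

(* Since every p_i <= 1/4, P_k = p_0 ... p_k <= 1/(k+1). *)
Lemma pprod_small k : prodR (pfac ds) k <= / INR (S k).
Proof.
  induction k as [| k IH]; simpl prodR.
  - pose proof (pfac_bounds 0). simpl. rewrite Rinv_1. lra.
  - pose proof (pfac_bounds (S k)). pose proof (pprod_pos k).
    rewrite !S_INR in *. pose proof (pos_INR k).
    apply Rle_trans with (/ (INR k + 1) * / 4); [apply Rmult_le_compat; lra |].
    rewrite <- Rinv_mult. apply Rinv_le_contravar; nra.
Qed.

Lemma kn_spec n : 0 < n -> IsK ds n (kn ds n).
Proof.
  intro Hn. unfold kn. apply epsilon_spec, least_witness.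
  destruct (INR_unbounded n) as [m Hm].
  exists m. pose proof (pprod_small m). rewrite S_INR in *.
  apply Rle_trans with (/ (INR m + 1) * n); [apply Rmult_le_compat_r; lra |].
  apply (Rmult_le_reg_l (INR m + 1)); [lra |].
  field_simplify; lra.
Qed.

Lemma ln_dprod_bounds k :
  beta_x (INR d) * (- ln (prodR (pfac ds) k)) <= ln (prodR deg k) <=
  beta_x (INR D) * (- ln (prodR (pfac ds) k)).
Proof.
  induction k as [| k IH]; simpl prodR.
  - rewrite ln_pfac. destruct (Hds 0). apply ln_between_betas; auto.
  - pose proof (pprod_pos k). pose proof (dprod_pos k).
    pose proof (pfac_bounds (S k)). pose proof (deg_ge2 (S k)).
    rewrite !ln_mult by lra. rewrite Ropp_plus_distr, ln_pfac.
    destruct (Hds (S k)). pose proof (ln_between_betas d (ds (S k)) D Hd H3 H4).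
    fold (deg (S k)) in *. lra.
Qed.

Lemma ln_dprod_lower n k :
  0 < n -> prodR (pfac ds) k * n <= 1 ->
  beta_x (INR d) * ln n <= ln (prodR deg k).
Proof.
  intros Hn Hk. pose proof (pprod_pos k).
  assert (Hln : ln (prodR (pfac ds) k) + ln n <= 0).
  { rewrite <- ln_mult, <- ln_1 by lra. apply ln_le; nra. }
  pose proof (beta_x_pos (INR d) (INR_ge2 d Hd)).
  pose proof (proj1 (ln_dprod_bounds k)). nra.
Qed.

Lemma ln_dprod_upper n k :
  1 < n -> (forall j, (j < k)%nat -> ~ (prodR (pfac ds) j * n <= 1)) ->
  ln (prodR deg k) <= beta_x (INR D) * ln n + ln (INR D).
Proof.
  intros Hn Hmin. pose proof (ln_pos n Hn).
  pose proof (beta_x_pos (INR D) (INR_ge2 D ltac:(destruct (Hds 0); lia))).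
  destruct k as [| k]; simpl prodR.
  - pose proof (deg_le_D 0). nra.
  - pose proof (pprod_pos k). pose proof (dprod_pos k). pose proof (deg_ge2 (S k)).
    assert (Hgt : 1 < prodR (pfac ds) k * n) by (apply Rnot_le_lt, Hmin; lia).
    assert (Hln : 0 < ln (prodR (pfac ds) k) + ln n).
    { rewrite <- ln_mult by lra. apply ln_pos. lra. }
    rewrite ln_mult by lra.
    pose proof (deg_le_D (S k)). pose proof (proj2 (ln_dprod_bounds k)). nra.
Qed.

End BoundedDegrees.

Theorem mainTheorem8 :
  forall D : nat, exists C : R,
    forall (d : nat) (ds : nat -> nat),
      (2 <= d)%nat -> (d <= D)%nat ->
      (forall i : nat, (d <= ds i)%nat /\ (ds i <= D)%nat) ->
      forall n : nat, (2 <= n)%nat ->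
        beta_x (INR d) <= beta ds (INR n) /\
        beta ds (INR n) <= beta_x (INR D) + C / ln (INR n).
Proof.
  intro D. exists (ln (INR D)).
  intros d ds Hd _ Hds n Hn.
  pose proof (INR_ge2 n Hn) as Hn2.
  pose proof (ln_pos (INR n) ltac:(lra)) as Hlnn.
  destruct (kn_spec d D ds Hd Hds (INR n) ltac:(lra)) as [Hk Hmin].
  unfold beta.
  split.
  - apply (Rmult_le_reg_r (ln (INR n))); [lra |].
    unfold Rdiv. rewrite Rmult_assoc, Rinv_l, Rmult_1_r by lra.
    apply (ln_dprod_lower d D ds Hd Hds); [lra | exact Hk].
  - apply (Rmult_le_reg_r (ln (INR n))); [lra |].
    replace ((beta_x (INR D) + ln (INR D) / ln (INR n)) * ln (INR n))
      with (beta_x (INR D) * ln (INR n) + ln (INR D)) by (field; lra).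
    unfold Rdiv. rewrite Rmult_assoc, Rinv_l, Rmult_1_r by lra.
    apply (ln_dprod_upper d D ds Hd Hds); [lra | exact Hmin].
Qed.
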